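(* Let $t$ be a rooted tree with vertex set $I$, and let $\mu(\widehat{0},t)$ be the Möbius number of the interval $[\widehat{0},t]$ in $\Pi_{\operatorname{NAP}}(I)$. If $t$ is a corolla with $n+1$ vertices (a root joined directly to $n$ leaves, $n\geq0$), then $\mu(\widehat{0},t)=(-1)^n$; otherwise $\mu(\widehat{0},t)=0$.
   Context: $\Pi_{\operatorname{NAP}}(I)$ is the set of forests of rooted trees whose vertex set is exactly $I$, partially ordered as follows: $y$ covers $x$ iff $y$ is obtained from $x$ by adding an edge from the root of one component of $x$ to the root of another component (the latter root remaining the root); $\leq$ is the reflexive–transitive closure; $\widehat{0}$ is the forest of one-vertex trees. The Möbius number of an interval $[a,b]$ is $\mu(a,b)$ for the Möbius function of the poset. *)

From HB Require Import structures.
From mathcomp Require Import all_boot all_order all_algebra.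
Set Implicit Arguments. Unset Strict Implicit. Unset Printing Implicit Defensive.
Import GRing.Theory Num.Theory.
Local Open Scope ring_scope.

(* The recursion is run with fuel #|T|, which exceeds the length of every
   chain in T, so it computes the genuine Möbius function. *)
Fixpoint mobius_rec (T : finType) (le : rel T) (k : nat) (x y : T) : int :=
  match k with
  | 0%N => (x == y)%:Z
  | k'.+1 =>
      if x == y then 1
      else if le x y then
        - \sum_(z : T | le x z && le z y && (z != y)) mobius_rec le k' x z
      else 0
  end.

Definition mobius (T : finType) (le : rel T) (x y : T) : int :=
  mobius_rec le #|T| x y.

(* Rooted forests with vertex set exactly I, encoded by the parent map:
   par v = None iff v is a root, par v = Some w iff w is the parent of v. *)
Definition parent_acyclic (I : finType) (par : {ffun I -> option I}) : bool :=
  [forall x : I, iter #|I|.+1 (obind par) (Some x) == None].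

Definition forest (I : finType) := {par : {ffun I -> option I} | parent_acyclic par}.

Definition is_root (I : finType) (x : forest I) (v : I) : bool := val x v == None.

(* y covers x iff y is obtained from x by adding an edge from the root r1 of
   one component to the root r2 of another component, r2 staying the root
   (so r1 becomes a child of r2). *)
Definition nap_cover (I : finType) : rel (forest I) := fun x y =>
  [exists r1 : I, exists r2 : I,
     [&& r1 != r2, is_root x r1, is_root x r2 &
      val y == [ffun v => if v == r1 then Some r2 else val x v]]].

Definition nap_le (I : finType) : rel (forest I) := connect (@nap_cover I).

Lemma zero_forest_acyclic (I : finType) :
  parent_acyclic [ffun _ : I => (None : option I)].
Proof.
apply/forallP => x; rewrite iterS.
by case: (iter _ _ _) => [v|] //=; rewrite ffunE.
Qed.

Definition nap_zero (I : finType) : forest I :=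
  exist _ [ffun _ => None] (zero_forest_acyclic I).

Definition is_tree (I : finType) (t : forest I) : bool :=
  #|[set v | is_root t v]| == 1%N.

Definition is_corolla (I : finType) (t : forest I) : bool :=
  [exists r : I, is_root t r && [forall v : I, (v != r) ==> (val t v == Some r)]].

(* A forest z lies below w exactly when z is the restriction of w to a set of
   vertices closed under taking children.  We check that the Moebius recursion
   is solved by mu(0, w) = (-1)^(number of non-roots) when w has height <= 1,
   and 0 otherwise: the forests of height <= 1 below w are the restrictions of
   w to sets of leaves of w, so summing over [0, w] gives the alternating sum
   over the subsets of the leaf set, which vanishes since that set is nonempty
   for w <> 0.  A tree of height <= 1 is a corolla. *)

From mathcomp Require Import all_boot all_order all_algebra.
Import GRing.Theory.
Local Open Scope ring_scope.
Set Implicit Arguments. Unset Strict Implicit.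

Lemma sum_subset_sign (T : finType) (R : comPzRingType) (L : {set T}) :
  L != set0 -> \sum_(K : {set T} | K \subset L) (-1) ^+ #|K| = 0 :> R.
Proof.
case/set0Pn=> a aL.
pose F (i : T) : R := - (i \in L)%:R.
have termE (K : {set T}) : \prod_i (if i \in K then F i else 1) =
                           if K \subset L then (-1) ^+ #|K| else 0.
  rewrite -big_mkcond /=; case: ifPn => [KL | /subsetPn [i iK iNL]].
    rewrite (eq_bigr (fun=> -1)) ?prodr_const // => i /(subsetP KL) iL.
    by rewrite /F iL.
  by rewrite (bigD1 i) //= /F (negbTE iNL) oppr0 mul0r.
rewrite big_mkcond /= -(eq_bigr _ (fun K _ => termE K)) -bigA_distr.
by rewrite (bigD1 a) //= /F aL addNr mul0r.
Qed.

Lemma parent_acyclic_sub (I : finType) (par par' : {ffun I -> option I}) :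
  (forall v, par' v = None \/ par' v = par v) ->
  parent_acyclic par -> parent_acyclic par'.
Proof.
move=> par'E /forallP acyc; apply/forallP => x.
have iterE n : iter n (obind par') (Some x) = None \/
               iter n (obind par') (Some x) = iter n (obind par) (Some x).
  elim: n => [|n [] IHn]; rewrite ?iterS ?IHn; [by right | by left |].
  by case: (iter n (obind par) (Some x)) => [u|] /=; [apply: par'E | left].
by case: (iterE #|I|.+1) => ->.
Qed.

Section Forests.
Variable I : finType.
Implicit Types (w z : forest I) (K : {set I}).

Definition nonroots w : {set I} := [set v | val w v != None].

Definition leaves w : {set I} :=
  [set v | (val w v != None) && [forall d, val w d != Some v]].

Definition height_le1 w : bool :=
  [forall v, forall p, (val w v == Some p) ==> (val w p == None)].

Definition mobius0 w : int := if height_le1 w then (-1) ^+ #|nonroots w| else 0.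

Definition restrict_par w K : {ffun I -> option I} :=
  [ffun v => if v \in K then val w v else None].

Lemma restrict_par_acyclic w K : parent_acyclic (restrict_par w K).
Proof.
apply: parent_acyclic_sub (valP w) => v; rewrite ffunE.
by case: (v \in K); [right | left].
Qed.

Definition restrict w K : forest I :=
  exist _ (restrict_par w K) (restrict_par_acyclic w K).

Lemma restrictE w K v : val (restrict w K) v = if v \in K then val w v else None.
Proof. by rewrite ffunE. Qed.

Lemma nonroots_restrict w K : nonroots (restrict w K) = K :&: nonroots w.
Proof. by apply/setP => v; rewrite !inE restrictE; case: (v \in K). Qed.

Lemma leaves_sub_nonroots w : leaves w \subset nonroots w.
Proof. by apply/subsetP => v; rewrite !inE => /andP []. Qed.

Lemma nonroots_eq0 w : nonroots w = set0 -> w = nap_zero I.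
Proof.
move=> w0; apply: val_inj; apply/ffunP => v; rewrite ffunE.
have: v \notin nonroots w by rewrite w0 inE.
by rewrite inE negbK => /eqP.
Qed.

(* The invariant of [nap_le z w]: z is the restriction of w to a set of
   vertices closed under taking w-children. *)
Definition closed_subforest z w : Prop :=
  (forall v p, val z v = Some p -> val w v = Some p) /\
  (forall v p d, val z v = Some p -> val w d = Some v -> val z d = Some v).

Lemma cover_closed_subforest x y w :
  nap_cover x y -> closed_subforest y w -> closed_subforest x w.
Proof.
case/existsP=> r1 /existsP [r2 /and4P [r12 r1_root r2_root /eqP yE]].
case=> yw_edge yw_closed.
have {}yE v : val y v = if v == r1 then Some r2 else val x v by rewrite yE ffunE.
have xy_edge v p : val x v = Some p -> val y v = Some p.
  move=> xv; rewrite yE; case: eqP => // vr1.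
  by move: r1_root; rewrite /is_root -vr1 xv.
split=> [v p /xy_edge /yw_edge // | v p d /xy_edge xv wd].
move: (yw_closed _ _ _ xv wd); rewrite yE; case: eqP => // _ [vr2].
by move: xv; rewrite -vr2 yE eq_sym (negbTE r12) (eqP r2_root).
Qed.

Lemma nap_le_closed_subforest z w : nap_le z w -> closed_subforest z w.
Proof.
case/connectP=> s; elim: s z => [|y s IHs] z /=; first by move=> _ ->.
by case/andP=> zy ys wE; apply: cover_closed_subforest zy (IHs y ys wE).
Qed.

Lemma nap_le_restrict z w : nap_le z w -> restrict w (nonroots z) = z.
Proof.
move/nap_le_closed_subforest=> [zw_edge _].
apply: val_inj; apply/ffunP => v; rewrite -/(val _ v) restrictE inE.
by case zv: (val z v) => [p|] /=; [apply: zw_edge | ].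
Qed.

Lemma nonroots_le z w : nap_le z w -> nonroots z \subset nonroots w.
Proof.
move/nap_le_closed_subforest=> [zw_edge _]; apply/subsetP => v.
by rewrite !inE; case zv: (val z v) => [p|] //= _; rewrite (zw_edge _ _ zv).
Qed.

Lemma nap_lt_card_nonroots z w :
  nap_le z w -> z != w -> (#|nonroots z| < #|nonroots w|)%N.
Proof.
move=> zw; apply: contraNT; rewrite -leqNgt => card_wz.
have nonroots_zw : nonroots z = nonroots w.
  by apply/eqP; rewrite eqEcard nonroots_le.
by rewrite -(nap_le_restrict zw) nonroots_zw (nap_le_restrict (connect0 _ w)).
Qed.

Lemma nap_cover_detach w r1 r2 :
  val w r1 = Some r2 -> val w r2 = None -> nap_cover (restrict w (~: [set r1])) w.
Proof.
move=> wr1 wr2; have r12 : r1 != r2 by apply: contraPneq wr2 => <-; rewrite wr1.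
apply/existsP; exists r1; apply/existsP; exists r2.
rewrite r12 /is_root !restrictE !inE eqxx (eq_sym r2) r12 wr2 /=.
apply/eqP/ffunP => v; rewrite ffunE restrictE !inE.
by case: eqP => [-> | ].
Qed.

Lemma restrict_full w K :
  K \subset leaves w ->
  (forall r1 r2, val w r1 = Some r2 -> val w r2 = None -> r1 \in K) ->
  restrict w K = w.
Proof.
move=> /subsetP Kleaves top_in_K.
have parent_root v p : val w v = Some p -> val w p = None.
  have /forallP/(_ v)/eqP := valP w; move: #|I|.+1 => n.
  elim: n v p => [|n IHn] v p //; rewrite iterSr /= => + wv; rewrite wv.
  case wp: (val w p) => [q|] // /(IHn p q)/(_ wp) wq.
  have /Kleaves := top_in_K _ _ wp wq.
  by rewrite inE => /andP [_ /forallP /(_ v)]; rewrite wv eqxx.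
apply: val_inj; apply/ffunP => v.
rewrite -/(val _ v) restrictE; case wv: (val w v) => [p|]; last by case: ifP.
by rewrite (top_in_K v p) // (parent_root v p).
Qed.

Lemma restrict_restrict w K L : restrict (restrict w L) K = restrict w (K :&: L).
Proof.
apply: val_inj; apply/ffunP => v; rewrite -!/(val _ v) !restrictE inE.
by case: (v \in K).
Qed.

Lemma leaves_restrict w L : leaves w :&: L \subset leaves (restrict w L).
Proof.
apply/subsetP => v; rewrite !inE restrictE.
case/andP=> [/andP [wv /forallP noChild] ->]; rewrite wv /=.
by apply/forallP => d; rewrite restrictE; case: (d \in L); first exact: noChild.
Qed.

Lemma restrict_leaves_le w K : K \subset leaves w -> nap_le (restrict w K) w.
Proof.
have [n] := ubnP #|nonroots w|; elim: n w K => // n IHn w K wn Kleaves.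
case: (boolP [exists r1, exists r2,
  [&& val w r1 == Some r2, val w r2 == None & r1 \notin K]])
  => [/existsP [r1 /existsP [r2 /and3P [/eqP wr1 /eqP wr2 r1K]]] | all_top_in_K];
  last first.
  rewrite restrict_full //; first exact: connect0.
  move=> r1 r2 wr1 wr2; apply: contraTT (existsPn all_top_in_K r1) => r1K.
  by rewrite negbK; apply/existsP; exists r2; rewrite wr1 wr2 !eqxx.
set y := restrict w (~: [set r1]).
have wK : restrict w K = restrict y K.
  rewrite restrict_restrict; congr restrict; apply/esym/setIidPl/subsetP => v vK.
  by rewrite !inE; apply: contraNneq r1K => <-.
have yn : (#|nonroots y| < n)%N.
  rewrite -ltnS; apply: leq_trans wn; rewrite ltnS nonroots_restrict setIC -setDE.
  by rewrite (cardsD1 r1 (nonroots w)) inE wr1.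
have Kleaves_y : K \subset leaves y.
  apply: subset_trans (leaves_restrict _ _); rewrite subsetI Kleaves /=.
  by apply/subsetP => v vK; rewrite !inE; apply: contraNneq r1K => <-.
rewrite wK; apply: connect_trans (IHn y K yn Kleaves_y) _.
exact/connect1/(nap_cover_detach wr1 wr2).
Qed.

Lemma nap_zero_le w : nap_le (nap_zero I) w.
Proof.
have -> : nap_zero I = restrict w set0.
  by apply: val_inj; apply/ffunP => v; rewrite -/(val _ v) restrictE ffunE inE.
exact/restrict_leaves_le/sub0set.
Qed.

(* Following children from a non-root vertex of a leafless forest would
   produce parent paths longer than [#|I|]. *)
Lemma leaves_neq0 w : w != nap_zero I -> leaves w != set0.
Proof.
move=> w0; have /set0Pn [v0 v0_nr] : nonroots w != set0.
  by apply: contra w0 => /eqP/nonroots_eq0 ->.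
apply/negP => /eqP no_leaf.
pose child v := odflt v [pick d | val w d == Some v].
have childP v : v \in nonroots w -> val w (child v) = Some v.
  have : v \notin leaves w by rewrite no_leaf inE.
  rewrite !inE => /nandP [/negPn/eqP -> // | /forallPn [d /negPn /eqP wd] _].
  by rewrite /child; case: pickP => [d' /eqP // | /(_ d)]; rewrite wd eqxx.
pose vs i := iter i child v0.
have vs_nr i : vs i \in nonroots w.
  by elim: i => // i IHi; rewrite /vs iterS inE childP.
have vs_up i : iter i (obind (val w)) (Some (vs i)) = Some v0.
  elim: i => // i IHi; rewrite iterSr /vs iterS -/(vs i) /=.
  by move: (childP _ (vs_nr i)) => /= ->.
by have /forallP/(_ (vs #|I|.+1)) := valP w; rewrite vs_up.
Qed.

Lemma nonroots_height_le1 z w :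
  nap_le z w -> height_le1 z -> nonroots z \subset leaves w.
Proof.
move=> /nap_le_closed_subforest [zw_edge zw_closed] /forallP zh.
apply/subsetP => v; rewrite !inE; case zv: (val z v) => [p|] //= _.
rewrite (zw_edge _ _ zv) /=; apply/forallP => d; apply/eqP => wd.
by move: (forallP (zh d) v); rewrite (zw_closed _ _ _ zv wd) eqxx zv.
Qed.

Lemma height_le1_restrict w K : K \subset leaves w -> height_le1 (restrict w K).
Proof.
move=> /subsetP Kleaves; apply/forallP => v; apply/forallP => p; apply/implyP.
rewrite !restrictE; case: ifP => // vK /eqP wv; case: ifP => // /Kleaves.
by rewrite inE => /andP [_ /forallP /(_ v)]; rewrite wv eqxx.
Qed.

Lemma nonroots_restrict_leaves w K : K \subset leaves w -> nonroots (restrict w K) = K.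
Proof.
move=> Kleaves; rewrite nonroots_restrict; apply/setIidPl.
exact: subset_trans Kleaves (leaves_sub_nonroots w).
Qed.

(* Forests z <= w of height <= 1 are exactly the restrictions of w to sets of
   leaves, so the sum is an alternating sum over the subsets of [leaves w]. *)
Lemma sum_mobius0_le w : w != nap_zero I -> \sum_(z | nap_le z w) mobius0 z = 0.
Proof.
move=> w0; rewrite /mobius0 -big_mkcondr /=.
rewrite (reindex_onto (restrict w) nonroots); last first.
  by move=> z /andP [zw _]; apply: nap_le_restrict.
rewrite -[RHS](sum_subset_sign _ (leaves_neq0 w0)).
apply: eq_big => K; last by case/andP=> _ /eqP ->.
apply/idP/idP => [/andP [/andP [Kw Kh] /eqP <-] | Kleaves].
  exact: nonroots_height_le1.
rewrite restrict_leaves_le // height_le1_restrict //.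
by rewrite nonroots_restrict_leaves // eqxx.
Qed.

Lemma mobius0_zero : mobius0 (nap_zero I) = 1.
Proof.
rewrite /mobius0 ifT; last by apply/forallP => v; apply/forallP => p; rewrite ffunE.
suff -> : nonroots (nap_zero I) = set0 by rewrite cards0.
by apply/setP => v; rewrite !inE ffunE.
Qed.

Lemma mobius_rec_zero k w :
  (#|nonroots w| <= k)%N -> mobius_rec (@nap_le I) k (nap_zero I) w = mobius0 w.
Proof.
elim: k w => [|k IHk] w wk.
  move: wk; rewrite leqn0 cards_eq0 => /eqP/nonroots_eq0 ->.
  by rewrite /= eqxx mobius0_zero.
have [-> | w0] := eqVneq w (nap_zero I); first by rewrite /= eqxx mobius0_zero.
have := sum_mobius0_le w0; rewrite (bigD1 w) /=; last exact: connect0.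
move/eqP; rewrite addr_eq0 => /eqP ->.
rewrite eq_sym (negbTE w0) nap_zero_le; congr (- _).
apply: eq_big => [z | z /andP [/andP [_ zw] zNw]]; first by rewrite nap_zero_le.
by apply: IHk; rewrite -ltnS; apply: leq_trans (nap_lt_card_nonroots zw zNw) wk.
Qed.

(* The fuel [#|forest I|] of [mobius] suffices: v |-> restrict w [set v]
   embeds [nonroots w] into the forests. *)
Lemma card_nonroots_le w : (#|nonroots w| <= #|{: forest I}|)%N.
Proof.
rewrite -(@card_in_imset _ _ (fun v => restrict w [set v])) ?max_card //.
move=> u v u_nr v_nr /(congr1 nonroots).
by rewrite !nonroots_restrict !(setIidPl _) ?sub1set // => /set1_inj.
Qed.

Lemma card_nonroots_tree t : is_tree t -> #|nonroots t| = #|I|.-1.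
Proof.
move=> /eqP t_tree; have /eqP := cardsC [set v | is_root t v].
have -> : ~: [set v | is_root t v] = nonroots t by apply/setP => v; rewrite !inE.
by rewrite t_tree add1n => /eqP <-.
Qed.

Lemma corolla_height_le1 t : is_tree t -> is_corolla t = height_le1 t.
Proof.
move=> /cards1P [r rootsE].
have rootE v : (val t v == None) = (v == r).
  by move/setP/(_ v): rootsE; rewrite !inE.
apply/existsP/forallP => [[r' /andP [r'_root /forallP r'_parent]] v | t_height].
  apply/forallP => p; apply/implyP => /eqP tv.
  have vr' : v != r' by apply: contraTneq r'_root => <-; rewrite /is_root tv.
  by move/implyP/(_ vr')/eqP: (r'_parent v); rewrite tv => -[->].
exists r; rewrite /is_root rootE eqxx; apply/forallP => v; apply/implyP => vr.
case tv: (val t v) => [p|]; last by move: vr; rewrite -rootE tv.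
by move/forallP/(_ p): (t_height v); rewrite tv eqxx rootE => /eqP ->.
Qed.

End Forests.

Theorem proposition6p13 (I : finType) (t : forest I) :
  is_tree t ->
  mobius (@nap_le I) (nap_zero I) t =
    (if is_corolla t then (-1) ^+ (#|I|.-1) else 0).
Proof.
move=> t_tree; rewrite /mobius mobius_rec_zero; last exact: card_nonroots_le.
by rewrite /mobius0 corolla_height_le1 // card_nonroots_tree.
Qed.
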